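(* Let $A$ be an abelian group such that every uniformly fully inert subgroup of $A\oplus A$ is commensurable with some fully invariant subgroup of $A\oplus A$. Then every uniformly fully inert subgroup of $A$ is commensurable with some fully invariant subgroup of $A$.
   Context: All groups are additively written abelian groups. A subgroup $F$ of a group $G$ is fully invariant if $\phi(F)\subseteq F$ for every endomorphism $\phi$ of $G$. A subgroup $S$ of $G$ is uniformly fully inert if there is a fixed positive integer $m$ such that $(\phi(S)+S)/S$ has at most $m$ elements for every endomorphism $\phi$ of $G$. Subgroups $B,C$ of $G$ are commensurable if both $(B+C)/B$ and $(B+C)/C$ are finite. *)

From mathcomp Require Import all_boot all_algebra.
Set Implicit Arguments. Unset Strict Implicit. Unset Printing Implicit Defensive.
Import GRing.Theory.
Local Open Scope ring_scope.

Section Defs.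
Variable A : zmodType.

Definition is_subgroup (S : A -> Prop) : Prop :=
  S 0 /\ (forall x y, S x -> S y -> S (x - y)).

Definition is_endo (phi : A -> A) : Prop :=
  forall x y, phi (x + y) = phi x + phi y.

Definition img (phi : A -> A) (S : A -> Prop) : A -> Prop :=
  fun y => exists2 x, S x & y = phi x.

Definition sumg (B C : A -> Prop) : A -> Prop :=
  fun z => exists b c, [/\ B b, C c & z = b + c].

(* H is covered by at most m cosets of K; when K is a subgroup contained in
   the subgroup H, this says exactly that H/K has at most m elements. *)
Definition index_le (H K : A -> Prop) (m : nat) : Prop :=
  exists s : seq A, (size s <= m)%N /\
    forall x, H x -> exists2 y, y \in s & K (x - y).

Definition finite_index (H K : A -> Prop) : Prop := exists m, index_le H K m.

Definition commensurable (B C : A -> Prop) : Prop :=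
  finite_index (sumg B C) B /\ finite_index (sumg B C) C.

Definition fully_invariant (F : A -> Prop) : Prop :=
  is_subgroup F /\ forall phi, is_endo phi -> forall x, F x -> F (phi x).

Definition uniformly_fully_inert (S : A -> Prop) : Prop :=
  is_subgroup S /\ exists m : nat, (0 < m)%N /\
    forall phi, is_endo phi -> index_le (sumg (img phi S) S) S m.

End Defs.

(* If S is uniformly fully inert in A, so is S x S in A + A: an endomorphism of
   A + A is a 2x2 matrix of endomorphisms of A, and each entry moves S by at most
   m cosets, so S x S is moved by at most m^4 cosets.  Conversely, slicing a
   subgroup F of A + A along the first summand, a -> F (a, 0), preserves full
   invariance (endomorphisms of A act diagonally on A + A) and turns a
   commensurability between S x S and F into one between S and the slice. *)

From mathcomp Require Import all_boot all_algebra.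
Set Implicit Arguments. Unset Strict Implicit. Unset Printing Implicit Defensive.
Import GRing.Theory.
Local Open Scope ring_scope.

Definition prodg (A B : zmodType) (P : A -> Prop) (Q : B -> Prop) : A * B -> Prop :=
  fun q => P q.1 /\ Q q.2.

Definition slice (A B : zmodType) (F : A * B -> Prop) : A -> Prop :=
  fun a => F (a, 0).

Section Subgroups.
Variable A : zmodType.
Implicit Types (H K S : A -> Prop).

Lemma subgroupD S x y : is_subgroup S -> S x -> S y -> S (x + y).
Proof.
move=> [S0 SB] Sx Sy; have := SB x (0 - y) Sx (SB _ _ S0 Sy).
by rewrite sub0r opprK.
Qed.

Lemma index_le_sub H H' K K' m :
  (forall x, H' x -> H x) -> (forall x, K x -> K' x) ->
  index_le H K m -> index_le H' K' m.
Proof.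
move=> sHH' sKK' [s [size_s cover]]; exists s; split=> // x /sHH' /cover[y ys Kxy].
by exists y => //; apply: sKK'.
Qed.

Lemma index_le_sumg H1 H2 K m1 m2 : is_subgroup K ->
  index_le H1 K m1 -> index_le H2 K m2 -> index_le (sumg H1 H2) K (m1 * m2).
Proof.
move=> Ksub [s1 [size1 cover1]] [s2 [size2 cover2]].
exists [seq y1 + y2 | y1 <- s1, y2 <- s2]; split.
  by rewrite size_allpairs leq_mul.
move=> _ [x1 [x2 [/cover1[y1 y1s K1] /cover2[y2 y2s K2] ->]]].
exists (y1 + y2); first exact: allpairs_f.
by rewrite opprD addrACA; apply: subgroupD.
Qed.

End Subgroups.

Lemma index_le_prodg (A B : zmodType) (G1 L1 : A -> Prop) (G2 L2 : B -> Prop) m1 m2 :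
  index_le G1 L1 m1 -> index_le G2 L2 m2 ->
  index_le (prodg G1 G2) (prodg L1 L2) (m1 * m2).
Proof.
move=> [s1 [size1 cover1]] [s2 [size2 cover2]].
exists [seq (y1, y2) | y1 <- s1, y2 <- s2]; split.
  by rewrite size_allpairs leq_mul.
move=> [x1 x2] [/cover1[y1 y1s Ly1] /cover2[y2 y2s Ly2]].
by exists (y1, y2); first exact: allpairs_f.
Qed.

Lemma subgroup_prodg (A B : zmodType) (P : A -> Prop) (Q : B -> Prop) :
  is_subgroup P -> is_subgroup Q -> is_subgroup (prodg P Q).
Proof.
move=> [P0 PB] [Q0 QB]; split=> [|[a b] [c d] [Pa Qb] [Pc Qd]]; first by split.
by split; [apply: PB | apply: QB].
Qed.

Lemma pairx0D (A B : zmodType) : {morph (fun a : A => (a, 0 : B)) : x y / x + y}.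
Proof. by move=> x y; congr (_, _); rewrite addr0. Qed.

Lemma pair0xD (A B : zmodType) : {morph (fun b : B => (0 : A, b)) : x y / x + y}.
Proof. by move=> x y; congr (_, _); rewrite addr0. Qed.

Section Square.
Variable A : zmodType.

Lemma endo_entry (phi : A * A -> A * A) (e : A -> A * A) (p : A * A -> A) :
  {morph e : x y / x + y} -> {morph p : x y / x + y} ->
  is_endo phi -> is_endo (p \o phi \o e).
Proof. by move=> eD pD phiD x y; rewrite /= eD phiD pD. Qed.

Variable S : A -> Prop.
Hypothesis Ssub : is_subgroup S.

Lemma sumg_img_square_entry (phi : A * A -> A * A) (p : A * A -> A) :
  {morph p : x y / x + y} -> (forall c, prodg S S c -> S (p c)) -> is_endo phi ->
  forall z, sumg (img phi (prodg S S)) (prodg S S) z ->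
  sumg (sumg (img (p \o phi \o (fun a => (a, 0))) S) S)
       (sumg (img (p \o phi \o (fun a => (0, a))) S) S) (p z).
Proof.
move=> pD pS phiD _ [_ [c [[[q1 q2] [Sq1 Sq2] ->] Sc ->]]].
have split_q : (q1, q2) = (q1, 0) + (0, q2) :> A * A.
  by congr (_, _); rewrite ?addr0 ?add0r.
exists (p (phi (q1, 0)) + 0), (p (phi (0, q2)) + p c); split.
- by exists (p (phi (q1, 0))), 0; split=> //; [exists q1 | case: Ssub].
- by exists (p (phi (0, q2))), (p c); split=> //; [exists q2 | apply: pS].
- by rewrite addr0 split_q phiD !pD addrA.
Qed.

Lemma ufi_prodg : uniformly_fully_inert S -> uniformly_fully_inert (prodg S S).
Proof.
move=> [_ [m [m_gt0 inertS]]]; split; first exact: subgroup_prodg.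
exists (m * m * (m * m))%N; split; first by rewrite !muln_gt0 m_gt0.
move=> phi phiD.
have entry e p : {morph e : x y / x + y} -> {morph p : x y / x + y} ->
    index_le (sumg (img (p \o phi \o e) S) S) S m.
  by move=> eD pD; apply: inertS; apply: endo_entry.
have row p : {morph p : x y / x + y} ->
    index_le (sumg (sumg (img (p \o phi \o (fun a => (a, 0))) S) S)
                   (sumg (img (p \o phi \o (fun a => (0, a))) S) S)) S (m * m).
  move=> pD; apply: index_le_sumg => //.
  - exact: entry (@pairx0D A A) pD.
  - exact: entry (@pair0xD A A) pD.
apply: index_le_sub (index_le_prodg (row fst _) (row snd _)) => //.
by move=> z Hz; split; apply: (sumg_img_square_entry _ _ phiD) => // c [].
Qed.

End Square.

Section Slice.
Variables A B : zmodType.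
Implicit Types (F : A * B -> Prop).

Lemma fully_invariant_proj1 F : fully_invariant F -> forall q, F q -> F (q.1, 0).
Proof.
move=> [_ invF] q; apply: (invF (fun q => (q.1, 0))) => x y.
exact: pairx0D.
Qed.

Lemma fully_invariant_slice F : fully_invariant F -> fully_invariant (slice F).
Proof.
move=> [[F0 FB] invF]; split.
  by split=> // x y Fx Fy; have := FB _ _ Fx Fy; congr F; congr (_, _); rewrite subr0.
move=> psi psiD x; apply: (invF (fun q => (psi q.1, 0))) => a b.
by congr (_, _); [exact: psiD | rewrite addr0].
Qed.

Lemma index_le_slice (H K : A * B -> Prop) m :
  (forall q, K q -> K (q.1, 0)) -> index_le H K m -> index_le (slice H) (slice K) m.
Proof.
move=> Kproj [s [size_s cover]]; exists (map fst s); split; first by rewrite size_map.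
move=> x /cover[y ys Kxy]; exists y.1; first exact: map_f.
exact: Kproj Kxy.
Qed.

Lemma sumg_slice (P Q : A * B -> Prop) (P' Q' : A -> Prop) :
  (forall a, P' a -> P (a, 0)) -> (forall a, Q' a -> Q (a, 0)) ->
  forall x, sumg P' Q' x -> slice (sumg P Q) x.
Proof.
move=> sP sQ _ [b [c [/sP Pb /sQ Qc ->]]].
by exists (b, 0), (c, 0); split=> //; apply: pairx0D.
Qed.

Lemma commensurable_slice (S : A -> Prop) (T : B -> Prop) F :
  T 0 -> fully_invariant F -> commensurable (prodg S T) F -> commensurable S (slice F).
Proof.
move=> T0 fiF [[m1 cov1] [m2 cov2]].
have sumg_sub : forall x, sumg S (slice F) x -> slice (sumg (prodg S T) F) x.
  by apply: sumg_slice.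
split; [exists m1 | exists m2].
- apply: index_le_sub (index_le_slice _ cov1) => //; first by move=> x [].
  by move=> q [Sq _].
- exact: index_le_sub (index_le_slice (fully_invariant_proj1 fiF) cov2).
Qed.

End Slice.

Theorem proposition2p3 (A : zmodType) :
  (forall S : (A * A)%type -> Prop, uniformly_fully_inert S ->
     exists F, fully_invariant F /\ commensurable S F) ->
  forall S : A -> Prop, uniformly_fully_inert S ->
     exists F, fully_invariant F /\ commensurable S F.
Proof.
move=> square_hyp S ufiS; have [Ssub _] := ufiS; have [S0 _] := Ssub.
have [F [fiF commF]] := square_hyp _ (ufi_prodg Ssub ufiS).
exists (slice F); split; first exact: fully_invariant_slice.
exact: commensurable_slice S0 fiF commF.
Qed.
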